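(* Let $n\ge 1$ and $0\le r\le n$, and let $G_{n,r}$ be the simple graph on $V=\{0,1,\ldots,n\}$ obtained from the complete graph $K_{n+1}$ by deleting the $r$ edges $\{0,i\}$ for $n-r+1\le i\le n$. Then $\dim_{\mathbb K}\left(R_n/\mathcal{M}_{G_{n,r}}^{(1)}\right)=\det\left(\widetilde Q_{G_{n,r}}\right)$.
   Context: $\mathbb K$ is a field, $R_n=\mathbb K[x_1,\ldots,x_n]$. For a loopless multigraph $G$ on $V=\{0,1,\ldots,n\}$ with adjacency matrix $[a_{ij}]_{0\le i,j\le n}$ ($a_{ij}=a_{ji}$ = number of edges between $i$ and $j$, $a_{ii}=0$), and $\emptyset\ne A\subseteq[n]$, put $d_A(i)=\sum_{j\in V\setminus A}a_{ij}$ for $i\in A$, and $m_A=\prod_{i\in A}x_i^{d_A(i)}$. The $1$-skeleton ideal is $\mathcal{M}_G^{(1)}=\langle m_A:\emptyset\ne A\subseteq[n],\ |A|\le 2\rangle\subseteq R_n$. Writing $d_i=\sum_{j\in V}a_{ij}$, the truncated signless Laplace matrix $\widetilde Q_G$ is the $n\times n$ matrix with entries $(\widetilde Q_G)_{ii}=d_i$ and $(\widetilde Q_G)_{ij}=a_{ij}$ for $i\ne j$, $i,j\in[n]$ (i.e. $D+A(G)$ with row and column of the root $0$ deleted). *)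

From HB Require Import structures.
From mathcomp Require Import all_boot all_order all_algebra.
From mathcomp Require Import multinomials.mpoly.
Set Implicit Arguments. Unset Strict Implicit. Unset Printing Implicit Defensive.
Import GRing.Theory.
Local Open Scope ring_scope.

(* Vertices V = {0,...,n} are 'I_n.+1 (0 = root); the variable x_i (i in [n])
   is 'X_k with k : 'I_n, corresponding to vertex i = k+1 = lift ord0 k. *)
Definition vtx (n : nat) (k : 'I_n) : 'I_n.+1 := lift ord0 k.

(* A loopless multigraph is given by its adjacency function a (a i j = #edges). *)
Definition multigraph (n : nat) (a : 'I_n.+1 -> 'I_n.+1 -> nat) : Prop :=
  (forall i j, a i j = a j i) /\ (forall i, a i i = 0%N).

Definition dA (n : nat) (a : 'I_n.+1 -> 'I_n.+1 -> nat) (A : {set 'I_n}) (i : 'I_n) : nat :=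
  (\sum_(j : 'I_n.+1 | j \notin [set vtx k | k in A]) a (vtx i) j)%N.

Definition mA (K : fieldType) (n : nat) (a : 'I_n.+1 -> 'I_n.+1 -> nat) (A : {set 'I_n})
  : {mpoly K[n]} :=
  \prod_(i in A) 'X_i ^+ (dA a A i).

Definition in_skeleton1 (K : fieldType) (n : nat) (a : 'I_n.+1 -> 'I_n.+1 -> nat)
  (p : {mpoly K[n]}) : Prop :=
  exists f : {set 'I_n} -> {mpoly K[n]},
    p = \sum_(A : {set 'I_n} | (A != set0) && (#|A| <= 2)%N) f A * mA K a A.

(* dim_K (R_n / I) = d : there are d polynomials whose classes form a K-basis
   of the quotient R_n / I. *)
Definition quot_dim (K : fieldType) (n : nat) (I : {mpoly K[n]} -> Prop) (d : nat) : Prop :=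
  exists b : 'I_d -> {mpoly K[n]},
    (forall p : {mpoly K[n]}, exists c : 'I_d -> K,
        I (p - \sum_(i < d) c i *: b i)) /\
    (forall c : 'I_d -> K, I (\sum_(i < d) c i *: b i) -> forall i, c i = 0).

(* truncated signless Laplacian: D + A(G) with the root row/column deleted *)
Definition trunc_signless_laplacian (n : nat) (a : 'I_n.+1 -> 'I_n.+1 -> nat) : 'M[int]_n :=
  \matrix_(i < n, j < n)
    (if i == j then (\sum_(k : 'I_n.+1) a (vtx i) k)%:Z else (a (vtx i) (vtx j))%:Z).

Definition Gnr_adj (n r : nat) (i j : 'I_n.+1) : nat :=
  nat_of_bool ((i != j) &&
    ~~ (((i == ord0) && (n - r + 1 <= j)%N) || ((j == ord0) && (n - r + 1 <= i)%N))).

(* Only one feature of G_{n,r} matters: the non-root vertices are pairwise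
   joined by exactly one edge.  Write d_i for the degree of vertex i.
   1. M^(1) is a monomial ideal: a polynomial lies in it iff its coefficients
      at all standard monomials (those divisible by no generator m_A) vanish,
      so the standard monomials form a K-basis of the quotient.
   2. The generators are x_i^(d_i) and x_i^(d_i - 1) x_j^(d_j - 1) (i != j),
      so with e = d - 1 a monomial x^m is standard iff m <= e coordinatewise
      with equality in at most one coordinate.
   3. Such exponents number prod_j e_j + sum_i prod_(j != i) e_j.
   4. Q~ = diag(e) + J, whose determinant is the same expression (expand the
      first row by multilinearity and induct on n).
   5. If some d_i = 0 (only for n = r = 1), then m_{{i}} = 1 and row i of Q~
      is zero: both sides vanish. *)

From HB Require Import structures.
From mathcomp Require Import all_boot all_order all_algebra.
From mathcomp Require Import multinomials.mpoly.
From mathcomp Require Import zify.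
Set Implicit Arguments. Unset Strict Implicit. Unset Printing Implicit Defensive.
Import GRing.Theory.
Local Open Scope ring_scope.

Lemma mcoeffMX_ndiv (K : fieldType) n (p : {mpoly K[n]}) (e m : 'X_{1..n}) :
  ~~ (e <= m)%MM -> (p * 'X_[e])@_m = 0.
Proof.
move=> e_ndiv_m; rewrite {1}(mpolyE p) mulr_suml raddf_sum /= big1 // => k _.
rewrite -scalerAl -mpolyXD mcoeffZ mcoeffX.
case: eqP => [km_eq | _]; last by rewrite mulr0.
by move: e_ndiv_m; rewrite -km_eq lem_addl.
Qed.

Section StandardMonomials.
Variables (n : nat) (a : 'I_n.+1 -> 'I_n.+1 -> nat).

Definition gen_exp (A : {set 'I_n}) : 'X_{1..n} :=
  [multinom (if i \in A then dA a A i else 0%N) | i < n].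

Definition skeleton_index (A : {set 'I_n}) : bool := (A != set0) && (#|A| <= 2)%N.

Definition standard (m : 'X_{1..n}) : bool :=
  [forall A, skeleton_index A ==> ~~ (gen_exp A <= m)%MM].

Lemma mA_gen_exp (K : fieldType) (A : {set 'I_n}) : mA K a A = 'X_[gen_exp A].
Proof.
rewrite mpolyXE_id /mA (big_mkcond (fun i => i \in A)) /=.
by apply: eq_bigr => i _; rewrite mnmE; case: (i \in A).
Qed.

Variable K : fieldType.

Lemma skeleton0 : in_skeleton1 a (0 : {mpoly K[n]}).
Proof. by exists (fun _ => 0); rewrite big1 // => A _; rewrite mul0r. Qed.

Lemma skeletonD (p q : {mpoly K[n]}) :
  in_skeleton1 a p -> in_skeleton1 a q -> in_skeleton1 a (p + q).
Proof.
case=> f -> [g ->]; exists (fun A => f A + g A).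
by rewrite -big_split /=; apply: eq_bigr => A _; rewrite mulrDl.
Qed.

Lemma skeleton_nonstandard (c : K) (m : 'X_{1..n}) :
  ~~ standard m -> in_skeleton1 a (c *: 'X_[m]).
Proof.
move=> /forallPn [A]; rewrite negb_imply negbK => /andP [idxA divA].
exists (fun B => if B == A then c *: 'X_[m - gen_exp A] else 0).
rewrite (bigD1 A) //= eqxx big1 ?addr0; last first.
  by move=> B /andP [_ /negbTE ->]; rewrite mul0r.
by rewrite mA_gen_exp -scalerAl -mpolyXD submK.
Qed.

Lemma in_skeleton1P (p : {mpoly K[n]}) :
  in_skeleton1 a p <-> (forall m, standard m -> p@_m = 0).
Proof.
split.
  case=> f -> m /forallP std_m; rewrite raddf_sum big1 // => A idxA.
  rewrite mA_gen_exp; apply: mcoeffMX_ndiv.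
  by have := std_m A; rewrite /skeleton_index idxA.
move=> std0; rewrite (mpolyE p) big_seq.
apply: (big_ind (in_skeleton1 a)); [exact: skeleton0 | exact: skeletonD |].
move=> m m_supp; apply: skeleton_nonstandard; apply/negP => /std0.
by apply/eqP; rewrite mcoeff_eq0 m_supp.
Qed.

Definition bounded_exp (B : nat) (f : {ffun 'I_n -> 'I_B}) : 'X_{1..n} :=
  [multinom (f i : nat) | i < n].

Lemma bounded_exp_inj B : injective (@bounded_exp B).
Proof.
move=> f g /mnmP fg; apply/ffunP => i; apply/val_inj.
by have := fg i; rewrite !mnmE.
Qed.

Definition standard_set (B : nat) : {set {ffun 'I_n -> 'I_B}} :=
  [set f | standard (bounded_exp f)].

Lemma quot_dim_standard (B : nat) :
  (forall m, standard m -> forall i, (m i < B)%N) ->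
  quot_dim (@in_skeleton1 K n a) #|standard_set B|.
Proof.
move=> boundB; set S := standard_set B.
have coefX (f g : {ffun 'I_n -> 'I_B}) :
    'X_[bounded_exp f]@_(bounded_exp g) = (f == g)%:R :> K.
  by rewrite mcoeffX (inj_eq (@bounded_exp_inj B)).
exists (fun i => 'X_[bounded_exp (enum_val i)]); split.
  move=> p; exists (fun i => p@_(bounded_exp (enum_val i))).
  apply/in_skeleton1P => m std_m.
  pose f : {ffun 'I_n -> 'I_B} := [ffun i => Ordinal (boundB m std_m i)].
  have m_f : m = bounded_exp f by apply/mnmP => i; rewrite !mnmE ffunE.
  have fS : f \in S by rewrite inE -m_f.
  have -> : \sum_(i < #|S|) p@_(bounded_exp (enum_val i)) *: 'X_[bounded_exp (enum_val i)]
           = \sum_(g in S) p@_(bounded_exp g) *: 'X_[bounded_exp g].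
    by rewrite [RHS]big_enum_val.
  rewrite mcoeffB raddf_sum /= (bigD1 f) //= big1 ?addr0.
    by rewrite mcoeffZ m_f coefX eqxx mulr1 subrr.
  by move=> g /andP [_ gf]; rewrite mcoeffZ m_f coefX (negbTE gf) mulr0.
move=> c /in_skeleton1P c_std i.
have std_i : standard (bounded_exp (enum_val i)) by have := enum_valP i; rewrite inE.
have := c_std _ std_i; rewrite raddf_sum /= (bigD1 i) //= big1 ?addr0.
  by rewrite mcoeffZ coefX eqxx mulr1.
by move=> j ji; rewrite mcoeffZ coefX (inj_eq enum_val_inj) (negbTE ji) mulr0.
Qed.

End StandardMonomials.

Definition one_tight n (x e : 'I_n -> nat) : bool :=
  [forall i, x i <= e i]%N &&
  [forall i, forall j, (i != j) ==> ~~ ((e i <= x i) && (e j <= x j))]%N.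

Section Counting.
Local Open Scope nat_scope.

Lemma prod_nat_of_bool (I : finType) (b : I -> bool) :
  \prod_i (b i : nat) = [forall i, b i].
Proof.
case: (boolP [forall i, b i]) => [/forallP all_b | /forallPn [i not_bi]].
  by rewrite big1 // => i _; rewrite all_b.
by rewrite (bigD1 i) //= (negbTE not_bi) mul0n.
Qed.

Lemma count_ffun_forall (I J : finType) (P : I -> J -> bool) :
  \sum_(f : {ffun I -> J}) [forall i, P i (f i)] = \prod_i \sum_j P i j.
Proof.
by rewrite bigA_distr_bigA; apply: eq_bigr => f _; rewrite prod_nat_of_bool.
Qed.

Lemma count_ord_lt B e : \sum_(k < B) (k < e) = minn B e.
Proof.
elim: B => [|B IH]; first by rewrite big_ord0 min0n.
by rewrite big_ord_recr /= IH; case: (ltnP B e) => /= ?; lia.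
Qed.

Lemma count_ord_eq B e : e < B -> \sum_(k < B) (k == e :> nat) = 1.
Proof.
move=> eB; rewrite (bigD1 (Ordinal eB)) //= eqxx big1 // => k.
by rewrite -(inj_eq val_inj) /= => /negbTE ->.
Qed.

Definition tight_at n (x e : 'I_n -> nat) (i j : 'I_n) : bool :=
  if j == i then x j == e j else x j < e j.

Lemma one_tightE n (x e : 'I_n -> nat) :
  one_tight x e = [forall j, x j < e j] || [exists i, [forall j, tight_at x e i j]].
Proof.
apply/idP/idP.
- case/andP => /forallP le_e /forallP at_most_one.
  case: (boolP [forall j, _]) => //= /forallPn [i not_lt].
  have eq_xi : x i = e i by apply/eqP; rewrite eqn_leq le_e leqNgt not_lt.
  apply/existsP; exists i; apply/forallP => j; rewrite /tight_at.
  case: eqP => [-> | /eqP ji]; first by rewrite eq_xi.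
  rewrite ltnNge; apply/negP => ej.
  have /forallP/(_ j)/implyP := at_most_one i.
  by rewrite eq_sym ji eq_xi leqnn ej => /(_ isT).
- case/orP => [/forallP lt_e | /existsP [i /forallP ti]]; apply/andP; split.
  + by apply/forallP => j; exact: ltnW (lt_e j).
  + apply/forallP => j; apply/forallP => k; apply/implyP => _.
    by rewrite leqNgt lt_e.
  + apply/forallP => j; have := ti j; rewrite /tight_at.
    by case: eqP => [_ /eqP -> | _ /ltnW].
  + apply/forallP => j; apply/forallP => k; apply/implyP => jk.
    have below_at l : l != i -> x l < e l.
      by move=> li; have := ti l; rewrite /tight_at (negbTE li).
    case: (eqVneq j i) => [eq_ji | ji]; last by rewrite leqNgt (below_at _ ji).
    have ki : k != i by rewrite -eq_ji eq_sym.
    by rewrite andbC leqNgt (below_at _ ki).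
Qed.

(* The cases of one_tightE are disjoint and the tight coordinate is unique, so
   the indicator of one_tight is a sum of indicators. *)
Lemma one_tight_split n (x e : 'I_n -> nat) :
  one_tight x e = [forall j, x j < e j] + \sum_i [forall j, tight_at x e i j] :> nat.
Proof.
have tight_uniq i k :
    [forall j, tight_at x e i j] -> [forall j, tight_at x e k j] -> i = k.
  move=> /forallP ti /forallP tk; apply/eqP; apply: contraT => ik.
  have ki : (k == i) = false by rewrite eq_sym (negbTE ik).
  have := ti k; have := tk k; rewrite /tight_at eqxx ki => /eqP ->.
  by rewrite ltnn.
have -> : \sum_i [forall j, tight_at x e i j] = [exists i, [forall j, tight_at x e i j]].
  case: existsP => [[i ti] | none]; last first.
    by rewrite big1 // => i _; case: forallP => // ?; case: none; exists i; apply/forallP.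
  rewrite (bigD1 i) //= ti big1 // => k ki.
  by case: (boolP [forall j, _]) => // tk; rewrite (tight_uniq _ _ tk ti) eqxx in ki.
have disjoint : ~~ ([forall j, x j < e j] && [exists i, [forall j, tight_at x e i j]]).
  apply/andP => [[/forallP lt_e /existsP [i /forallP ti]]].
  have := ti i; have := lt_e i; rewrite /tight_at eqxx => + /eqP eq_xi.
  by rewrite eq_xi ltnn.
by rewrite one_tightE; move: disjoint; case: [forall j, _]; case: [exists i, _].
Qed.

Lemma count_one_tight n B (e : 'I_n -> nat) : (forall j, e j < B) ->
  \sum_(f : {ffun 'I_n -> 'I_B}) one_tight (fun j => f j : nat) e =
  \prod_j e j + \sum_i \prod_(j | j != i) e j.
Proof.
move=> eB.
under [LHS]eq_bigr => f _ do rewrite (one_tight_split (fun j => f j : nat) e).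
rewrite big_split /= exchange_big /=; congr (_ + _).
  rewrite (count_ffun_forall (fun j (k : 'I_B) => k < e j)).
  by apply: eq_bigr => j _; rewrite count_ord_lt (minn_idPr (ltnW (eB j))).
apply: eq_bigr => i _.
rewrite (count_ffun_forall (fun j (k : 'I_B) => tight_at (fun=> k : nat) e i j)).
rewrite (bigD1 i) //= {1}/tight_at eqxx count_ord_eq // mul1n.
apply: eq_bigr => j ji; rewrite /tight_at (negbTE ji).
by rewrite count_ord_lt (minn_idPr (ltnW (eB j))).
Qed.

End Counting.

Section DiagPlusOnes.
Variable R : comPzRingType.

Definition diag_plus_ones n (e : 'I_n -> R) : 'M[R]_n :=
  \matrix_(i, j) (e i *+ (i == j) + 1).

Lemma lift0_neq0 n (i : 'I_n) : (lift ord0 i == ord0 :> 'I_n.+1) = false.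
Proof. by apply/negbTE; rewrite eq_sym neq_lift. Qed.

(* Replacing the first row of diag(e) + J by ones gives determinant
   e_1 ... e_n: subtracting the first row from the others leaves an upper
   triangular matrix. *)
Lemma det_first_row_ones n (e : 'I_n.+1 -> R) :
  \det (\matrix_(i, j) (if i == ord0 then 1 else diag_plus_ones e i j)) =
  \prod_(j < n) e (lift ord0 j).
Proof.
pose L : 'M[R]_n.+1 :=
  \matrix_(i, k) ((i == k)%:R + ((k == ord0) && (i != ord0))%:R).
pose U : 'M[R]_n.+1 :=
  \matrix_(i, j) (if i == ord0 then 1 else e i *+ (i == j)).
have -> : \matrix_(i, j) (if i == ord0 then 1 else diag_plus_ones e i j) = L *m U.
  apply/matrixP => i j; rewrite !mxE.
  under eq_bigr => k _ do rewrite !mxE mulrDl.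
  rewrite big_split /= (bigD1 i) //= big1; last first.
    by move=> k; rewrite eq_sym => /negbTE ->; rewrite mul0r.
  rewrite (bigD1 ord0) //= [X in _ = _ + (_ + X)]big1; last first.
    by move=> k /negbTE ->; rewrite mul0r.
  rewrite eqxx mul1r !addr0.
  by case: (i == ord0); rewrite /= ?mul0r ?mulr1 ?addr0.
have lower_L : is_trig_mx L.
  apply/is_trig_mxP => i k ik; rewrite !mxE.
  have -> : (i == k) = false by apply/negP => /eqP E; move: ik; rewrite E ltnn.
  have -> : (k == ord0) = false by apply/negP => /eqP E; move: ik; rewrite E.
  by rewrite addr0.
have upper_U : is_trig_mx U^T.
  apply/is_trig_mxP => i k ik; rewrite !mxE.
  have -> : (k == ord0) = false by apply/negP => /eqP E; move: ik; rewrite E.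
  by have -> : (k == i) = false by apply/negP => /eqP E; move: ik; rewrite E ltnn.
rewrite det_mulmx (det_trig lower_L) -[\det U]det_tr (det_trig upper_U).
rewrite big1 ?mul1r; last by move=> i _; rewrite !mxE eqxx andbN addr0.
rewrite big_ord_recl !mxE eqxx mul1r; apply: eq_bigr => i _.
by rewrite !mxE lift0_neq0 eqxx.
Qed.

(* Expanding the first row e_0 * delta_0 + (1, ..., 1) by multilinearity. *)
Lemma det_diag_plus_ones_rec n (e : 'I_n.+1 -> R) :
  \det (diag_plus_ones e) =
  e ord0 * \det (diag_plus_ones (fun i => e (lift ord0 i))) +
  \prod_(j < n) e (lift ord0 j).
Proof.
pose Bm : 'M[R]_n.+1 :=
  \matrix_(i, j) (if i == ord0 then (j == ord0)%:R else diag_plus_ones e i j).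
pose Cm : 'M[R]_n.+1 :=
  \matrix_(i, j) (if i == ord0 then 1 else diag_plus_ones e i j).
rewrite (@determinant_multilinear _ _ _ Bm Cm ord0 (e ord0) 1); first last.
- by apply/matrixP => i j; rewrite !mxE lift0_neq0.
- by apply/matrixP => i j; rewrite !mxE lift0_neq0.
- apply/rowP => j; rewrite !mxE eqxx /= mul1r eq_sym.
  by case: (j == ord0); rewrite /= ?mulr1n ?mulr0n ?mulr1 ?mulr0.
rewrite mul1r det_first_row_ones (expand_det_row _ ord0) big_ord_recl.
rewrite big1 ?addr0; last first.
  by move=> j _; rewrite !mxE lift0_neq0 mul0r.
rewrite !mxE eqxx mul1r /cofactor expr0 mul1r; congr (_ * \det _ + _).
by apply/matrixP => i j; rewrite !mxE lift0_neq0 (inj_eq (@lift_inj _ ord0)).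
Qed.

Lemma prod_ord_lift0 n (F : 'I_n.+1 -> R) (i : 'I_n) :
  \prod_(j | j != lift ord0 i) F j = F ord0 * \prod_(j | j != i) F (lift ord0 j).
Proof.
rewrite big_mkcond big_ord_recl neq_lift [in RHS]big_mkcond.
by congr (_ * _); apply: eq_bigr => j _; rewrite (inj_eq (@lift_inj _ ord0)).
Qed.

Lemma det_diag_plus_ones n (e : 'I_n -> R) :
  \det (diag_plus_ones e) = \prod_j e j + \sum_i \prod_(j | j != i) e j.
Proof.
elim: n e => [|n IH] e; first by rewrite det_mx00 big_ord0 big_ord0 addr0.
rewrite det_diag_plus_ones_rec IH mulrDr big_ord_recl big_ord_recl /=.
have -> : \prod_(j | j != ord0) e j = \prod_j e (lift ord0 j).
  rewrite big_mkcond big_ord_recl eqxx /= mul1r.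
  by apply: eq_bigr.
have -> : \sum_i \prod_(j | j != lift ord0 i) e j =
          e ord0 * \sum_i \prod_(j | j != i) e (lift ord0 j).
  by rewrite big_distrr; apply: eq_bigr => i _; exact: prod_ord_lift0.
by rewrite addrAC addrA.
Qed.

End DiagPlusOnes.

Lemma standard_small_sets n a (m : 'X_{1..n}) :
  standard a m =
    [forall i, ~~ (gen_exp a [set i] <= m)%MM] &&
    [forall i, forall j, (i != j) ==> ~~ (gen_exp a [set i; j] <= m)%MM].
Proof.
apply/forallP/andP => [std_m | [/forallP std1 /forallP std2] A].
  have nonempty i (A : {set 'I_n}) : i \in A -> A != set0.
    by move=> iA; apply/set0Pn; exists i.
  split; apply/forallP => i.
    apply: (implyP (std_m _)); rewrite /skeleton_index cards1 andbT.
    by apply: (nonempty i); rewrite set11.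
  apply/forallP => j; apply/implyP => ij; apply: (implyP (std_m _)).
  by rewrite /skeleton_index cards2 ij (nonempty i) // !inE eqxx.
apply/implyP => /andP [/set0Pn [k kA] cardA].
have : (#|A| == 1)%N || (#|A| == 2)%N.
  have : (0 < #|A|)%N by apply/card_gt0P; exists k.
  by move: cardA; case: #|A| => [|[|[|]]].
case/orP => [/cards1P [i ->] | /cards2P [i [j [ij ->]]]]; first exact: std1.
by have /forallP/(_ j) := std2 i; rewrite ij.
Qed.

Lemma gen_exp_le n a (A : {set 'I_n}) (m : 'X_{1..n}) :
  (gen_exp a A <= m)%MM = [forall k in A, dA a A k <= m k]%N.
Proof.
apply/mnm_lepP/forall_inP => le_m k.
  by move=> kA; have := le_m k; rewrite mnmE kA.
by rewrite mnmE; case: ifP => kA //; exact: le_m.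
Qed.

Definition degree n (a : 'I_n.+1 -> 'I_n.+1 -> nat) (i : 'I_n) : nat :=
  (\sum_k a (vtx i) k)%N.

Section PairwiseAdjacent.
Variables (n : nat) (a : 'I_n.+1 -> 'I_n.+1 -> nat).
Hypothesis loopless : forall i, a (vtx i) (vtx i) = 0%N.
Hypothesis adjacent : forall i j, i != j -> a (vtx i) (vtx j) = 1%N.

Lemma dA_single (i : 'I_n) : dA a [set i] i = degree a i.
Proof.
rewrite /dA /degree imset_set1 [in RHS](bigD1 (vtx i)) //= loopless add0n.
by apply: eq_bigl => j; rewrite in_set1.
Qed.

Lemma dA_pair (i j : 'I_n) : i != j -> dA a [set i; j] i = (degree a i).-1.
Proof.
move=> ij; rewrite /dA /degree imsetU1 imset_set1.
rewrite [in RHS](bigD1 (vtx i)) //= loopless add0n.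
rewrite [in RHS](bigD1 (vtx j)) ?(inj_eq (@lift_inj _ ord0)) 1?eq_sym //.
by rewrite adjacent //=; apply: eq_bigl => k; rewrite !inE negb_or.
Qed.

Hypothesis degree_pos : forall i, (0 < degree a i)%N.

Lemma standard_one_tight (m : 'X_{1..n}) :
  standard a m = one_tight m (fun i => (degree a i).-1).
Proof.
have single i : (gen_exp a [set i] <= m)%MM = (degree a i <= m i)%N.
  rewrite gen_exp_le; apply/forall_inP/idP => [|le_m k /set1P ->].
    by move/(_ i (set11 i)); rewrite dA_single.
  by rewrite dA_single.
have pair i j : i != j -> (gen_exp a [set i; j] <= m)%MM =
    ((degree a i).-1 <= m i)%N && ((degree a j).-1 <= m j)%N.
  move=> ij; rewrite gen_exp_le.
  apply/forall_inP/andP => [le_m | [le_i le_j] k]; last first.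
    rewrite !inE => /orP [] /eqP ->; first by rewrite dA_pair.
    by rewrite setUC dA_pair // eq_sym.
  split; first by have := le_m i; rewrite dA_pair // !inE eqxx; apply.
  by have := le_m j; rewrite setUC dA_pair 1?eq_sym // !inE eqxx; apply.
rewrite standard_small_sets /one_tight; congr (_ && _).
  by apply: eq_forallb => i; rewrite single -ltnNge; have := degree_pos i; lia.
apply: eq_forallb => i; apply: eq_forallb => j.
by case: (boolP (i == j)) => //= ij; rewrite pair.
Qed.

(* Off the diagonal Q~ is all ones, so Q~ = diag(d - 1) + J. *)
Lemma laplacian_diag_plus_ones :
  trunc_signless_laplacian a = diag_plus_ones (fun i => ((degree a i).-1)%:Z).
Proof.
apply/matrixP => i j; rewrite !mxE.
case: (eqVneq i j) => [-> | ij]; last by rewrite adjacent.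
by rewrite mulr1n -[1]/(1%N%:Z) -PoszD addn1 prednK ?degree_pos.
Qed.

(* With all degrees positive, the quotient dimension is the number of standard
   monomials, which by counting matches det(diag(d - 1) + J). *)
Lemma skeleton_dim_pos_degrees (K : fieldType) :
  exists d : nat, quot_dim (@in_skeleton1 K n a) d /\
    d%:Z = \det (trunc_signless_laplacian a).
Proof.
pose e i := (degree a i).-1.
pose B := (\sum_i degree a i)%N.
have e_lt_B j : (e j < B)%N.
  have : (degree a j <= B)%N by rewrite /B (bigD1 j) //= leq_addr.
  by have := degree_pos j; rewrite /e; lia.
have std_e m : standard a m = one_tight m e := standard_one_tight m.
exists #|standard_set a B|; split.
  apply: quot_dim_standard => m; rewrite std_e => /andP [/forallP le_e _] i.
  exact: leq_ltn_trans (le_e i) (e_lt_B i).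
have card_std : #|standard_set a B| =
    (\sum_(f : {ffun 'I_n -> 'I_B}) one_tight (fun j => f j : nat) e)%N.
  rewrite -sum1_card big_mkcond /=; apply: eq_bigr => f _.
  rewrite inE std_e /one_tight; congr (nat_of_bool (_ && _)).
    by apply: eq_forallb => i; rewrite mnmE.
  by do 2!apply: eq_forallb => ?; rewrite !mnmE.
rewrite card_std count_one_tight // laplacian_diag_plus_ones det_diag_plus_ones.
rewrite PoszD -!natz natr_sum natr_prod; congr (_ + _); apply: eq_bigr => i _.
  exact: natz.
by rewrite natr_prod; apply: eq_bigr => j _; exact: natz.
Qed.

End PairwiseAdjacent.

(* A non-root vertex i of degree 0 gives the generator m_{{i}} = 1, so the
   quotient is zero; row i of Q~ vanishes, so the determinant is zero too. *)
Lemma skeleton_dim_isolated (K : fieldType) n (a : 'I_n.+1 -> 'I_n.+1 -> nat)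
    (i : 'I_n) : degree a i = 0%N ->
  exists d : nat, quot_dim (@in_skeleton1 K n a) d /\
    d%:Z = \det (trunc_signless_laplacian a).
Proof.
move=> deg0.
have no_edge k : a (vtx i) k = 0%N.
  by move/eqP: deg0; rewrite /degree sum_nat_eq0 => /forallP/(_ k)/implyP/(_ isT)/eqP.
have not_std m : ~~ standard a m.
  apply/forallPn; exists [set i]; rewrite negb_imply negbK /skeleton_index cards1 andbT.
  rewrite gen_exp_le; apply/andP; split; first by apply/set0Pn; exists i; rewrite set11.
  apply/forall_inP => k /set1P ->.
  by rewrite /dA big1 // => j _; rewrite no_edge.
exists 0%N; split.
  have -> : 0%N = #|standard_set a 0|.
    apply/esym/eqP; rewrite cards_eq0; apply/eqP/setP => f.
    by rewrite !inE (negbTE (not_std _)).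
  by apply: quot_dim_standard => m; rewrite (negbTE (not_std m)).
rewrite (expand_det_row _ i) big1 // => j _; rewrite !mxE.
case: eqP => _; last by rewrite no_edge mul0r.
by rewrite -[(\sum_k _)%N]/(degree a i) deg0 mul0r.
Qed.

Lemma skeleton_dim_pairwise_adjacent (K : fieldType) n
    (a : 'I_n.+1 -> 'I_n.+1 -> nat) :
  (forall i, a (vtx i) (vtx i) = 0%N) ->
  (forall i j, i != j -> a (vtx i) (vtx j) = 1%N) ->
  exists d : nat, quot_dim (@in_skeleton1 K n a) d /\
    d%:Z = \det (trunc_signless_laplacian a).
Proof.
move=> loopless adjacent.
have [pos | /forallPn [i]] := boolP [forall i, 0 < degree a i]%N.
  by apply: skeleton_dim_pos_degrees => // i; apply: (forallP pos).
by rewrite -eqn0Ngt => /eqP; exact: skeleton_dim_isolated.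
Qed.

Lemma Gnr_loopless n r (i : 'I_n) : @Gnr_adj n r (vtx i) (vtx i) = 0%N.
Proof. by rewrite /Gnr_adj eqxx. Qed.

(* Only root edges are removed, so the non-root vertices stay pairwise adjacent. *)
Lemma Gnr_adjacent n r (i j : 'I_n) : i != j -> @Gnr_adj n r (vtx i) (vtx j) = 1%N.
Proof. by move=> ij; rewrite /Gnr_adj (inj_eq (@lift_inj _ ord0)) ij /vtx !lift0_neq0. Qed.

Theorem proposition1 (K : fieldType) (n r : nat) (hn : (1 <= n)%N) (hr : (r <= n)%N) :
  exists d : nat,
    quot_dim ((@in_skeleton1 K n (@Gnr_adj n r))) d /\
    d%:Z = \det (trunc_signless_laplacian (@Gnr_adj n r)).
Proof.
exact: skeleton_dim_pairwise_adjacent (@Gnr_loopless n r) (@Gnr_adjacent n r).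
Qed.
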